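(* Let $K_1,K_2$ be knots in $S^3$. If $r\in js(K_1\sharp K_2)$, then there exist $r_1\in js(K_1)$ and $r_2\in js(K_2)$ with $r=r_1+r_2$.
   Context: The colored Jones function of $K$ is the sequence $J_{K,n}(q)\in\mathbb{Z}[q^{\pm1}]$, $n\in\mathbb{N}$ (normalized so that the unknot has $J_n=1$ and $J_{K,2}$ is the Jones polynomial); it satisfies $J_{K_1\sharp K_2,n}=J_{K_1,n}J_{K_2,n}$. $\delta_K(n)$ is the maximum $q$-degree of $J_{K,n}(q)$; it is a quadratic quasi-polynomial $c_2(n)n^2+c_1(n)n+c_0(n)$ with rational-valued periodic functions $c_i$ of integral period. $js(K)$ is the set of cluster points (limits of subsequences) of $\{4\delta_K(n)/n^2\}_{n\in\mathbb{N}}$, which equals the finite set of values of $4c_2(n)$. *)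

From HB Require Import structures.
From mathcomp Require Import all_boot all_order all_algebra.
Set Implicit Arguments. Unset Strict Implicit. Unset Printing Implicit Defensive.
Import Order.TTheory GRing.Theory Num.Theory.
Local Open Scope ring_scope.

(** Laurent polynomials in q with integer coefficients, represented as pairs
    (p, k) standing for q^{-k} * p(q), p : {poly int}.  The representation is
    not unique; equality of Laurent polynomials is [laurent_eq]. *)
Definition laurent := ({poly int} * nat)%type.

Definition laurent_eq (a b : laurent) : Prop :=
  a.1 * 'X^(b.2) = b.1 * 'X^(a.2).

Definition laurent_mul (a b : laurent) : laurent := (a.1 * b.1, (a.2 + b.2)%N).

Definition laurent_nz (a : laurent) : bool := a.1 != 0.

Definition maxdeg (a : laurent) : int := (size a.1)%:Z - 1 - (a.2)%:Z.

Definition periodic (c : nat -> rat) : Prop :=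
  exists P : nat, (0 < P)%N /\ forall n, c (n + P)%N = c n.

Definition quadratic_quasi_poly (d : nat -> int) : Prop :=
  exists c2 c1 c0 : nat -> rat,
    [/\ periodic c2, periodic c1, periodic c0 &
      forall n : nat, (0 < n)%N ->
        (d n)%:~R = c2 n * (n%:R ^+ 2) + c1 n * n%:R + c0 n].

Definition cluster_point (R : realFieldType) (x : nat -> R) (r : R) : Prop :=
  forall eps : R, 0 < eps -> forall N : nat,
    exists n : nat, (N <= n)%N /\ `|x n - r| < eps.

Definition js (R : realFieldType) (J : nat -> laurent) (r : R) : Prop :=
  cluster_point (fun n : nat => (4 * maxdeg (J n))%:~R / (n%:R ^+ 2)) r.

(* The maximal degree of a product is the sum of maximal degrees, so the
   sequence x(n) = 4 delta(n) / n^2 of the connected sum is x1(n) + x2(n).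
   Each x_i is within O(1/n) of the periodic function 4 c2 of its knot, so
   the cluster points of x_i are exactly the values of 4 c2.  Passing to a
   common period L, x is within O(1/n) of the L-periodic sum of the two,
   hence every cluster point of x is a value a1(j) + a2(j), and a1(j), a2(j)
   are cluster points of x1, x2. *)
From HB Require Import structures.
From mathcomp Require Import all_boot all_order all_algebra.
From mathcomp Require Import zify ring lra.
Set Implicit Arguments. Unset Strict Implicit. Unset Printing Implicit Defensive.
Import Order.TTheory GRing.Theory Num.Theory.
Local Open Scope ring_scope.

Lemma maxdeg_mul (a b c : laurent) :
  laurent_nz a -> laurent_nz b -> laurent_nz c ->
  laurent_eq a (laurent_mul b c) -> maxdeg a = maxdeg b + maxdeg c.
Proof.
rewrite /laurent_nz /laurent_eq /laurent_mul /maxdeg /= => a0 b0 c0 eq_abc.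
have := congr1 (fun p : {poly int} => size p) eq_abc.
rewrite size_mulXn // size_mulXn ?mulf_neq0 // size_mul //.
move: a0 b0 c0; rewrite -!size_poly_gt0.
move: (size a.1) (size b.1) (size c.1) a.2 b.2 c.2 => *; lia.
Qed.

Definition is_period (T : Type) (f : nat -> T) (P : nat) : Prop :=
  forall n, f (n + P)%N = f n.

Section Periods.
Variables (T : Type) (f : nat -> T) (P : nat).
Hypothesis f_per : is_period f P.

Lemma is_periodMn k : is_period f (k * P).
Proof.
elim: k => [|k IHk] n; first by rewrite mul0n addn0.
by rewrite mulSn (addnC P) addnA f_per IHk.
Qed.

Lemma is_period_dvd M : (P %| M)%N -> is_period f M.
Proof. by move=> /dvdnP [k ->]; apply: is_periodMn. Qed.

Lemma is_period_mod n : f n = f (n %% P)%N.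
Proof. by rewrite {1}(divn_eq n P) addnC is_periodMn. Qed.

End Periods.

Lemma periodic_norm_bounded (R : realDomainType) (f : nat -> R) P :
  (0 < P)%N -> is_period f P -> exists B, forall n, `|f n| <= B.
Proof.
move=> P0 f_per; exists (\big[Num.max/0]_(j < P) `|f j|) => n.
rewrite (is_period_mod f_per).
exact: (le_bigmax 0 (fun j : 'I_P => `|f j|) (Ordinal (ltn_pmod n P0))).
Qed.

Lemma eventually_div_nat_lt (R : archiRealFieldType) (C e : R) :
  0 <= C -> 0 < e -> exists N, forall n, (N <= n)%N -> C / n%:R < e.
Proof.
move=> C0 e0; exists (Num.bound (C / e)).+1 => n Nn.
have n0 : 0 < n%:R :> R by rewrite ltr0n; apply: leq_trans Nn.
rewrite ltr_pdivrMr // -ltr_pdivrMl // mulrC.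
apply: lt_le_trans (archi_boundP (divr_ge0 C0 (ltW e0))) _.
by rewrite ler_nat; apply: ltnW.
Qed.

Section PeriodicApproximation.
Variables (R : archiRealFieldType) (x a : nat -> R) (L : nat) (C : R).
Hypotheses (L0 : (0 < L)%N) (a_per : is_period a L).
Hypothesis x_near_a : forall n, (0 < n)%N -> `|x n - a n| <= C / n%:R.

Let C_ge0 : 0 <= C.
Proof. by have := x_near_a (ltn0Sn 0); rewrite divr1; apply: le_trans. Qed.

Lemma cluster_point_periodic_approx j : cluster_point x (a j).
Proof.
move=> eps eps0 N; have [M ltM] := eventually_div_nat_lt C_ge0 eps0.
set n := (j + (N + M).+1 * L)%N.
have n0 : (0 < n)%N by rewrite /n; nia.
exists n; split; first by rewrite /n; nia.
rewrite -(is_periodMn a_per (N + M).+1 j).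
by apply: le_lt_trans (x_near_a n0) (ltM _ _); rewrite /n; nia.
Qed.

Lemma cluster_point_periodic_approxP r :
  cluster_point x r -> exists j : 'I_L, r = a j.
Proof.
move=> r_cl; case: (boolP [exists j : 'I_L, r == a j]) => [/existsP [j /eqP ->]|].
  by exists j.
move=> /existsPn r_ne_a; exfalso.
pose e := \big[Num.min/1]_(j < L) `|r - a j|.
have e0 : 0 < e.
  by apply: lt_bigmin => // j _; rewrite normr_gt0 subr_eq0 (negPf (r_ne_a j)).
have e20 : 0 < e / 2 by rewrite divr_gt0.
have [M ltM] := eventually_div_nat_lt C_ge0 e20.
have [n [Mn x_near_r]] := r_cl _ e20 M.+1.
have n0 : (0 < n)%N by apply: leq_trans Mn.
have le_e : e <= `|r - a n|.
  rewrite (is_period_mod a_per);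
  exact: (bigmin_le 1 (Ordinal (ltn_pmod n L0)) (fun j : 'I_L => `|r - a j|)).
have := ler_distD (x n) r (a n); rewrite (distrC r (x n)).
have := x_near_a n0; have := ltM n (ltnW Mn); lra.
Qed.

End PeriodicApproximation.

Lemma quadratic_quasi_poly_approx (R : archiRealFieldType) (d : nat -> int) :
  quadratic_quasi_poly d ->
  exists L (a : nat -> R) C, [/\ (0 < L)%N, is_period a L &
    forall n, (0 < n)%N -> `|(4 * d n)%:~R / n%:R ^+ 2 - a n| <= C / n%:R].
Proof.
case=> c2 [c1 [c0 [[P2 [P20 c2_per]] [P1 [P10 c1_per]] [P0 [P00 c0_per]] d_eq]]].
have [B1 c1_le] := periodic_norm_bounded P10 c1_per.
have [B0 c0_le] := periodic_norm_bounded P00 c0_per.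
exists P2, (fun n => ratr (4 * c2 n)), (4 * ratr (B1 + B0)).
split => // [m | n n0]; first by rewrite c2_per.
have nR0 : n%:R != 0 :> R by rewrite pnatr_eq0 -lt0n.
have -> : (4 * d n)%:~R / n%:R ^+ 2 - ratr (4 * c2 n)
          = (4 * ratr (c1 n) + 4 * ratr (c0 n) / n%:R) / n%:R :> R.
  rewrite intrM.
  have -> : (d n)%:~R = ratr (c2 n) * n%:R ^+ 2 + ratr (c1 n) * n%:R + ratr (c0 n) :> R.
    by rewrite -ratr_int d_eq // !rmorphD !rmorphM /= !rmorph_nat.
  by rewrite rmorphM rmorph_nat; field.
rewrite normrM normfV (ger0_norm (ler0n _ _)) ler_pM2r ?invr_gt0 ?ltr0n //.
have c1R : `|ratr (c1 n)| <= ratr B1 :> R by rewrite -ratr_norm ler_rat.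
have c0R : `|ratr (c0 n)| <= ratr B0 :> R by rewrite -ratr_norm ler_rat.
have c0n : `|ratr (c0 n) / n%:R| <= `|ratr (c0 n)| :> R.
  rewrite normrM normfV (ger0_norm (ler0n _ _)) ler_pdivrMr ?ltr0n //.
  by rewrite ler_peMr ?ler1n.
apply: le_trans (ler_normD _ _) _.
rewrite -mulrA !(normrM 4) (ger0_norm (_ : 0 <= 4 :> R)) // rmorphD; lra.
Qed.

Theorem lemma2p1
  (R : archiRealFieldType)
  (Knot : Type) (connected_sum : Knot -> Knot -> Knot)
  (J : Knot -> nat -> laurent)
  (J_nz : forall (K : Knot) (n : nat), (0 < n)%N -> laurent_nz (J K n))
  (J_quasi : forall K : Knot, quadratic_quasi_poly (fun n => maxdeg (J K n)))
  (J_mul : forall (K1 K2 : Knot) (n : nat), (0 < n)%N ->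
     laurent_eq (J (connected_sum K1 K2) n) (laurent_mul (J K1 n) (J K2 n)))
  (K1 K2 : Knot) (r : R) :
  js (J (connected_sum K1 K2)) r ->
  exists r1 r2 : R, [/\ js (J K1) r1, js (J K2) r2 & r = r1 + r2].
Proof.
move=> r_cl.
have [L1 [a1 [C1 [L10 a1_per x1_near]]]] := quadratic_quasi_poly_approx R (J_quasi K1).
have [L2 [a2 [C2 [L20 a2_per x2_near]]]] := quadratic_quasi_poly_approx R (J_quasi K2).
have L0 : (0 < L1 * L2)%N by rewrite muln_gt0 L10 L20.
have a_per : is_period (a1 \+ a2) (L1 * L2).
  move=> n /=; rewrite (is_period_dvd a1_per (dvdn_mulr _ (dvdnn L1)) n).
  by rewrite (is_period_dvd a2_per (dvdn_mull _ (dvdnn L2)) n).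
have [|j ->] := cluster_point_periodic_approxP (C := C1 + C2) L0 a_per _ r_cl.
  move=> n n0 /=.
  rewrite (maxdeg_mul (J_nz _ _ n0) (J_nz _ _ n0) (J_nz _ _ n0) (J_mul _ _ _ n0)).
  rewrite mulrDr intrD mulrDl opprD addrACA (mulrDl C1).
  by apply: le_trans (ler_normD _ _) _; apply: lerD; [apply: x1_near | apply: x2_near].
exists (a1 j), (a2 j); split => //.
  exact: (cluster_point_periodic_approx L10 a1_per x1_near).
exact: (cluster_point_periodic_approx L20 a2_per x2_near).
Qed.
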